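(* Let $X$ be a compact metric space, $T:X\to X$ a surjective local homeomorphism, $d\in\mathbb{N}$, $E\subseteq\mathbb{Z}$ finite and $\varepsilon>0$, and let $\varphi:X\to P_d(\mathbb{Z})$ be a continuous $(E,\varepsilon)$-equivariant map. Then there exist a finite set $S\subseteq\mathbb{Z}$ and a continuous $(E,\varepsilon)$-equivariant map $\varphi':X\to P_d(\mathbb{Z})$ with $\varphi'(X)\subseteq P(S)\cap P_d(\mathbb{Z})$.
   Context: $P_d(\mathbb{Z})$: probability measures on $\mathbb{Z}$ supported on at most $d+1$ points, metric $\rho(\mu,\nu)=\sum_m|\mu(m)-\nu(m)|$, action $\alpha_n(\mu)(m)=\mu(m-n)$. $P(S)$: probability measures supported in $S$. For $n\in\mathbb{Z}$, $T^n(\{x\})$ is the image under $T^n$ if $n\ge0$ and the preimage under $T^{|n|}$ if $n<0$. $\varphi$ is $(E,\varepsilon)$-equivariant if $\rho(\varphi(y),\alpha_n(\varphi(x)))<\varepsilon$ for all $n\in E$, $x\in X$, $y\in T^n(\{x\})$. *)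

From HB Require Import structures.
From mathcomp Require Import all_boot all_order all_algebra.
From mathcomp Require Import all_classical all_reals all_analysis.
Set Implicit Arguments. Unset Strict Implicit. Unset Printing Implicit Defensive.
Import Order.TTheory GRing.Theory Num.Theory.
Import numFieldNormedType.Exports.
Local Open Scope classical_set_scope.
Local Open Scope ring_scope.

(* A (finitely supported) probability measure on Z is represented by its mass
   function  mu : int -> R. *)

Definition in_Pd {R : realType} (d : nat) (mu : int -> R) : Prop :=
  (forall m, 0 <= mu m) /\
  exists s : seq int, [/\ uniq s, (size s <= d.+1)%N,
                         (forall m, m \notin s -> mu m = 0) &
                         \sum_(m <- s) mu m = 1].

Definition supported_in {R : realType} (S : seq int) (mu : int -> R) : Prop :=
  forall m, m \notin S -> mu m = 0.

Definition rho {R : realType} (mu nu : int -> R) : \bar R :=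
  (\esum_(m in [set: int]) (`|mu m - nu m|)%:E)%R.

Definition alpha {R : realType} (n : int) (mu : int -> R) : int -> R :=
  fun m => mu (m - n).

(* y ∈ T^n({x}) : image under T^n if n >= 0, preimage under T^|n| if n < 0 *)
Definition Tn_rel {X : Type} (T : X -> X) (n : int) (x y : X) : Prop :=
  if (0 <= n) then y = iter `|n|%N T x else iter `|n|%N T y = x.

Definition equivariant {R : realType} {X : Type} (T : X -> X)
  (E : seq int) (eps : R) (phi : X -> int -> R) : Prop :=
  forall n, n \in E -> forall x y, Tn_rel T n x y ->
    (rho (phi y) (alpha n (phi x)) < eps%:E)%E.

Definition rho_continuous {R : realType} {X : topologicalType}
  (phi : X -> int -> R) : Prop :=
  forall x (e : R), 0 < e -> \forall y \near x, (rho (phi x) (phi y) < e%:E)%E.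

(* T is a local homeomorphism: every point has an open neighbourhood U such that
   T(U) is open and T restricted to U is a homeomorphism onto T(U)
   (i.e. continuous, injective, and mapping open subsets of U to open sets). *)
Definition local_homeo {X : topologicalType} (T : X -> X) : Prop :=
  forall x, exists U : set X,
    [/\ open U, U x, open (T @` U), {within U, continuous T} &
        {in U &, injective T} /\
        (forall V, V `<=` U -> open V -> open (T @` V))].

From HB Require Import structures.
From mathcomp Require Import all_boot all_order all_algebra.
From mathcomp Require Import all_classical all_reals all_analysis.
From mathcomp Require Import ring lra.
Import Order.TTheory GRing.Theory Num.Theory.
Local Open Scope classical_set_scope.
Local Open Scope ring_scope.

(* By compactness, the strict equivariance inequalities hold with a uniform
   slack [et], and the family [phi x] is uniformly tight: one finite [S] carries
   mass more than [1 - et/4] of every [phi x].  Restricting [phi x] to [S] and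
   rescaling moves it by at most [2 (1 - mass)] < [et/2] in [rho], continuously
   in [x], so two triangle inequalities keep the equivariance bounds below
   [eps]. *)

Section SeqSums.
Context {R : realType}.
Implicit Types (s t : seq int) (f : int -> R).

Lemma big_mem_subseq s t f : uniq s -> uniq t -> {subset s <= t} ->
  \sum_(m <- t | m \in s) f m = \sum_(m <- s) f m.
Proof.
move=> us ut st; rewrite -big_filter; apply/perm_big/uniq_perm => //.
- exact: filter_uniq.
- by move=> m; rewrite mem_filter; case: (boolP (m \in s)) => // /st.
Qed.

Lemma big_subseq_supp s t f : uniq s -> uniq t -> {subset s <= t} ->
  (forall m, m \in t -> m \notin s -> f m = 0) ->
  \sum_(m <- t) f m = \sum_(m <- s) f m.
Proof.
move=> us ut st f0; rewrite (bigID (mem s)) /= [X in _ + X]big_seq_cond.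
by rewrite [X in _ + X]big1 ?addr0 ?big_mem_subseq // => m /andP[/f0].
Qed.

Lemma ler_sum_subseq s t f : uniq s -> uniq t -> {subset s <= t} ->
  (forall m, m \in t -> 0 <= f m) ->
  \sum_(m <- s) f m <= \sum_(m <- t) f m.
Proof.
move=> us ut st f0; rewrite [leRHS](bigID (mem s)) /= big_mem_subseq // lerDl.
by rewrite big_seq_cond sumr_ge0 // => m /andP[/f0].
Qed.

End SeqSums.

Section Rho.
Context {R : realType}.
Implicit Types (mu nu : int -> R) (t : seq int).

Lemma rho_ge0 mu nu : (0 <= rho mu nu)%E.
Proof. by apply: esum_ge0 => m _; rewrite lee_fin. Qed.

Lemma rhoC mu nu : rho mu nu = rho nu mu.
Proof. by congr esum; apply: funext => m; rewrite distrC. Qed.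

Lemma rho_triangle mu nu xi : (rho mu xi <= rho mu nu + rho nu xi)%E.
Proof.
rewrite /rho -esumD => [||m _]; last by rewrite lee_fin.
  by apply: le_esum => m _; rewrite -EFinD lee_fin ler_distD.
by move=> m _; rewrite lee_fin.
Qed.

Lemma rho_alpha n mu nu : rho (alpha n mu) (alpha n nu) = rho mu nu.
Proof.
rewrite /rho (@reindex_esum R _ _ setT setT (+%R^~ n)).
  by apply: eq_esum => m _; rewrite /alpha addrK.
by rewrite setTT_bijective; exists (fun m => m - n) => m; [exact: addrK|exact: subrK].
Qed.

Lemma rho_seqE t mu nu : uniq t -> (forall m, m \notin t -> mu m = nu m) ->
  rho mu nu = (\sum_(m <- t) `|mu m - nu m|)%:E.
Proof.
move=> ut mu_nu; rewrite /rho (esumID [set` t]) => [|m _]; last by rewrite lee_fin.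
rewrite [X in (_ + X)%E]esum1 ?adde0 => [|m [_ /negP /mu_nu ->]]; last first.
  by rewrite subrr normr0.
rewrite setTI esum_fset => [||m _]; [|exact: finite_seq|by rewrite lee_fin].
by rewrite -fsbig_seq // sumEFin.
Qed.

Lemma rho_ge_sum t mu nu : uniq t ->
  ((\sum_(m <- t) `|mu m - nu m|)%:E <= rho mu nu)%E.
Proof.
move=> ut; rewrite /rho (esumID [set` t]) => [|m _]; last by rewrite lee_fin.
rewrite setTI esum_fset => [||m _]; [|exact: finite_seq|by rewrite lee_fin].
by rewrite -fsbig_seq // sumEFin leeDl // esum_ge0 // => m _; rewrite lee_fin.
Qed.

Lemma rho_ltE {mu nu c} : (rho mu nu < c%:E)%E -> exists2 r, rho mu nu = r%:E & r < c.
Proof.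
move=> lt_c; have fin : rho mu nu \is a fin_num.
  by rewrite ge0_fin_numE ?rho_ge0 // (lt_trans lt_c (ltry _)).
exists (fine (rho mu nu)); first by rewrite fineK.
by rewrite -lte_fin fineK.
Qed.

Lemma rho_le_ltD {mu nu xi x y} : (rho mu nu <= x%:E)%E -> (rho nu xi < y%:E)%E ->
  (rho mu xi < (x + y)%:E)%E.
Proof.
move=> le_x lt_y; apply: le_lt_trans (rho_triangle mu nu xi) _.
rewrite EFinD lee_ltD // ge0_fin_numE ?rho_ge0 //.
exact: le_lt_trans le_x (ltry _).
Qed.

Lemma rho_lt_leD {mu nu xi x y} : (rho mu nu < x%:E)%E -> (rho nu xi <= y%:E)%E ->
  (rho mu xi < (x + y)%:E)%E.
Proof.
by move=> lt_x le_y; rewrite rhoC addrC (@rho_le_ltD xi nu mu) // rhoC.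
Qed.

End Rho.

Section Renormalisation.
Context {R : realType}.
Implicit Types (mu nu : int -> R) (S : seq int).

Definition mass S mu := \sum_(m <- S) mu m.

Definition renorm S mu : int -> R :=
  fun m => if m \in S then mu m / mass S mu else 0.

Lemma mass_le1 {d S mu} : in_Pd d mu -> uniq S -> mass S mu <= 1.
Proof.
move=> [mu_ge0 [s [us _ s0 s1]]] uS; pose t := undup (S ++ s).
have St : {subset S <= t} by move=> m mS; rewrite mem_undup mem_cat mS.
have st : {subset s <= t} by move=> m ms; rewrite mem_undup mem_cat ms orbT.
rewrite -s1 -(big_subseq_supp _ _ _ us (undup_uniq _) st) => [|m _ /s0 //].
exact: ler_sum_subseq _ _ _ uS (undup_uniq _) St _.
Qed.

Lemma mass_supported_in {d S mu} : in_Pd d mu -> uniq S -> supported_in S mu ->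
  mass S mu = 1.
Proof.
move=> [_ [s [us _ s0 s1]]] uS suppS; pose t := undup (S ++ s).
have St : {subset S <= t} by move=> m mS; rewrite mem_undup mem_cat mS.
have st : {subset s <= t} by move=> m ms; rewrite mem_undup mem_cat ms orbT.
rewrite /mass -(big_subseq_supp _ _ _ uS (undup_uniq _) St) => [|m _ /suppS //].
by rewrite (big_subseq_supp _ _ _ us (undup_uniq _) st) => [|m _ /s0].
Qed.

Lemma mass_subr_le_rho S mu nu : uniq S ->
  ((mass S mu - mass S nu)%:E <= rho mu nu)%E.
Proof.
move=> uS; apply: le_trans (rho_ge_sum _ _ _ uS); rewrite lee_fin /mass -sumrB.
by apply: le_trans (ler_norm_sum _ _ _); rewrite ler_norm.
Qed.

Lemma renorm_supported_in S mu : supported_in S (renorm S mu).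
Proof. by move=> m mS; rewrite /renorm (negbTE mS). Qed.

Lemma renorm_in_Pd {d S mu} : in_Pd d mu -> uniq S -> 0 < mass S mu ->
  in_Pd d (renorm S mu).
Proof.
move=> [mu_ge0 [s [us ss s0 _]]] uS mass_gt0; split.
  by move=> m; rewrite /renorm; case: ifP => // _; rewrite divr_ge0 // ltW.
exists [seq m <- s | m \in S]; split.
- exact: filter_uniq.
- by rewrite size_filter (leq_trans (count_size _ _)).
- move=> m; rewrite mem_filter /renorm; case: ifP => //= mS ms.
  by rewrite s0 ?mul0r.
rewrite big_seq (eq_bigr (fun m => mu m / mass S mu)) => [|m]; last first.
  by rewrite mem_filter /renorm => /andP[->].
rewrite -big_seq -mulr_suml; suff -> : \sum_(m <- [seq m <- s | m \in S]) mu m = mass S mu.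
  by rewrite mulfV // gt_eqF.
rewrite /mass [RHS](bigID (mem s)) /= [X in _ = _ + X]big1 ?addr0 => [|m /s0 //].
rewrite -[RHS]big_filter; apply/perm_big/uniq_perm; rewrite ?filter_uniq //.
by move=> m; rewrite !mem_filter andbC.
Qed.

(* Renormalising adds [1 - mass S mu] to the mass on [S] and removes as much
   off [S]. *)
Lemma rho_renorm_le {d S mu} : in_Pd d mu -> uniq S -> 0 < mass S mu ->
  (rho mu (renorm S mu) <= (2 * (1 - mass S mu))%:E)%E.
Proof.
move=> Pmu uS c_gt0; have c_le1 := mass_le1 Pmu uS.
case: Pmu => [mu_ge0 [s [us _ s0 s1]]]; pose t := undup (S ++ s).
have ut : uniq t := undup_uniq _.
have St : {subset S <= t} by move=> m mS; rewrite mem_undup mem_cat mS.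
have st : {subset s <= t} by move=> m ms; rewrite mem_undup mem_cat ms orbT.
rewrite (rho_seqE _ _ _ ut) => [|m mt]; last first.
  rewrite /renorm; case: ifP => [/St|_]; first by rewrite (negbTE mt).
  by apply: s0; apply: contra mt; apply: st.
rewrite lee_fin (bigID (mem S)) /=; set c := mass S mu.
have mass_t : \sum_(m <- t) mu m = 1 by rewrite (big_subseq_supp _ _ _ us ut st) // => m _ /s0.
have mass_tS : \sum_(m <- t | m \in S) mu m = c by rewrite big_mem_subseq.
have -> : \sum_(m <- t | m \in S) `|mu m - renorm S mu m| = 1 - c.
  rewrite (eq_bigr (fun m => mu m * (c^-1 - 1))) => [|m mS].
    by rewrite -mulr_suml mass_tS mulrBr mulfV ?gt_eqF // mulr1.
  rewrite /renorm mS -{1}[mu m]mulr1 -mulrBr normrM ger0_norm // ler0_norm.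
    by rewrite opprB.
  by rewrite subr_le0 invr_ge1 // unitfE gt_eqF.
have -> : \sum_(m <- t | m \notin S) `|mu m - renorm S mu m| = 1 - c.
  rewrite (eq_bigr mu) => [|m mS]; last first.
    by rewrite /renorm (negbTE mS) subr0 ger0_norm.
  by move: mass_t; rewrite (bigID (mem S)) /= mass_tS; lra.
lra.
Qed.

Lemma dist_div_le (a b c c' : R) : 0 < c -> 0 < c' -> 0 <= b ->
  `|a / c - b / c'| <= `|a - b| / c + b * (`|c' - c| / (c * c')).
Proof.
move=> c_gt0 c'_gt0 b_ge0.
have -> : a / c - b / c' = (a - b) / c + b * ((c' - c) / (c * c')).
  by field; rewrite !gt_eqF.
apply: le_trans (ler_normD _ _) _.
by rewrite !normrM !normfV normrM (ger0_norm b_ge0) !(gtr0_norm c_gt0) (gtr0_norm c'_gt0).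
Qed.

Lemma rho_renorm_renorm_le {S mu nu} : uniq S -> (forall m, 0 <= nu m) ->
  0 < mass S mu -> 0 < mass S nu ->
  (rho (renorm S mu) (renorm S nu) <=
     (2 * (\sum_(m <- S) `|mu m - nu m|) / mass S mu)%:E)%E.
Proof.
move=> uS nu_ge0 c_gt0 c'_gt0.
rewrite (rho_seqE _ _ _ uS) => [|m mS]; last by rewrite /renorm (negbTE mS).
set c := mass S mu; set c' := mass S nu; set D := \sum_(m <- S) `|mu m - nu m|.
rewrite lee_fin big_seq (eq_bigr (fun m => `|mu m / c - nu m / c'|)) => [|m mS].
  rewrite -big_seq.
  apply: le_trans (ler_sum _ (fun m _ => dist_div_le (mu m) (nu m) c c' c_gt0 c'_gt0 (nu_ge0 m))) _.
  have mass_dist : `|c' - c| <= D.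
    rewrite /c /c' /D /mass -sumrB; apply: le_trans (ler_norm_sum _ _ _) _.
    by apply: ler_sum => m _; rewrite distrC.
  rewrite big_split /= -!mulr_suml.
  have -> : c' * (`|c' - c| / (c * c')) = `|c' - c| / c by field; rewrite !gt_eqF.
  by rewrite -mulrDl ler_pM2r ?invr_gt0 // -/D; lra.
by rewrite /renorm mS.
Qed.

End Renormalisation.

Lemma filter_forall_seq {T : Type} {I : eqType} (F : set_system T) (s : seq I)
    (P : I -> T -> Prop) : Filter F ->
  (forall i, i \in s -> \forall x \near F, P i x) ->
  \forall x \near F, forall i, i \in s -> P i x.
Proof.
move=> FF; elim: s => [|i s IHs] Ps; first exact: nearW.
have Psx : \forall x \near F, forall j, j \in s -> P j x.
  by apply: IHs => j js; apply: Ps; rewrite inE js orbT.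
apply: filterS (filterI (Ps i (mem_head i s)) Psx) => x [Pix {}Psx] j.
by rewrite inE => /predU1P[->|/Psx].
Qed.

Lemma continuous_iter {X : topologicalType} (f : X -> X) k :
  continuous f -> continuous (iter k f).
Proof.
move=> cf; elim: k => [|k IHk] x /=; first exact: cvg_id.
exact: continuous_comp (IHk x) (cf _).
Qed.

Lemma local_homeo_continuous {X : topologicalType} {T : X -> X} :
  local_homeo T -> continuous T.
Proof.
move=> lhT x; have [U [oU Ux _ cTU _]] := lhT x.
by move: cTU; rewrite continuous_open_subspace // => /(_ x (mem_set Ux)).
Qed.

Section Compactness.
Context {R : realType} {X : topologicalType}.
Implicit Types (phi : X -> int -> R).

Lemma compact_rho_slack phi (a b : X -> X) n (eps : R) :
  compact [set: X] -> continuous a -> continuous b -> rho_continuous phi ->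
  (forall z, (rho (phi (b z)) (alpha n (phi (a z))) < eps%:E)%E) ->
  \forall et \near 0^'+, forall z,
    (rho (phi (b z)) (alpha n (phi (a z))) < (eps - et)%:E)%E.
Proof.
move=> /compact_near_coveringP cover ca cb cphi lt_eps.
pose P et z := (rho (phi (b z)) (alpha n (phi (a z))) < (eps - et)%:E)%E.
suff: \forall et \near 0^'+, [set: X] `<=` P et.
  by apply: filterS => et Pet z; apply: Pet.
apply: (cover R (0^'+) P) => x _.
have [r rE r_lt] := rho_ltE (lt_eps x); pose g := (eps - r) / 3.
have g_gt0 : 0 < g by rewrite /g; lra.
exists ([set z | (rho (phi (a x)) (phi (a z)) < g%:E)%E /\
                 (rho (phi (b x)) (phi (b z)) < g%:E)%E], [set et | et < g]).
  split; last exact: nbhs_right_lt.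
  have near_ax : \forall z \near x, (rho (phi (a x)) (phi (a z)) < g%:E)%E.
    exact: ca x _ (cphi (a x) g g_gt0).
  have near_bx : \forall z \near x, (rho (phi (b x)) (phi (b z)) < g%:E)%E.
    exact: cb x _ (cphi (b x) g g_gt0).
  exact: filterI near_ax near_bx.
case=> z et /= [[near_a near_b] et_lt]; rewrite rhoC in near_b.
have near_alpha : (rho (alpha n (phi (a x))) (alpha n (phi (a z))) < g%:E)%E.
  by rewrite rho_alpha.
have le_r : (rho (phi (b x)) (alpha n (phi (a x))) <= r%:E)%E by rewrite rE.
have := rho_le_ltD (ltW near_b) (rho_le_ltD le_r near_alpha).
by move/lt_le_trans; apply; rewrite lee_fin /g in et_lt *; lra.
Qed.

Lemma compact_uniformly_tight {phi d} {δ : R} :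
  compact [set: X] -> 0 < δ -> (forall x, in_Pd d (phi x)) -> rho_continuous phi ->
  exists2 S : seq int, uniq S & forall z, 1 - δ < mass S (phi z).
Proof.
move=> /compact_near_coveringP cover δ_gt0 Pd cphi.
pose F := filter_from [set: seq int] (fun s => [set S : seq int | {subset s <= S}]).
have FF : Filter F.
  apply: filter_from_filter => [|s s' _ _]; first by exists [::].
  exists (s ++ s') => // S /= sub_S.
  by split=> m ms; apply: sub_S; rewrite mem_cat ms ?orbT.
pose P S z := 1 - δ < mass (undup S) (phi z).
case: (cover _ F P FF) => [x _|s _ Ps]; last first.
  by exists (undup s) => [|z]; [exact: undup_uniq|exact: (Ps s (fun m ms => ms) z I)].
have [_ [s [_ _ s0 _]]] := Pd x.
exists ([set z | (rho (phi x) (phi z) < δ%:E)%E], [set S : seq int | {subset s <= S}]).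
  by split; [exact: cphi | exists s].
case=> z S /= [near_x sub_S].
have mass_x : mass (undup S) (phi x) = 1.
  apply: (mass_supported_in (Pd x)) (undup_uniq _) _ => m.
  by rewrite mem_undup => mS; apply: s0; apply: contra mS; apply: sub_S.
have := le_lt_trans (mass_subr_le_rho _ (phi x) (phi z) (undup_uniq S)) near_x.
by rewrite mass_x lte_fin /P; lra.
Qed.

End Compactness.

Section Equivariance.
Context {R : realType}.

Lemma equivariant_slack {X : topologicalType} (T : X -> X) (phi : X -> int -> R)
    n (eps : R) :
  compact [set: X] -> continuous T -> rho_continuous phi ->
  (forall x y, Tn_rel T n x y -> (rho (phi y) (alpha n (phi x)) < eps%:E)%E) ->
  \forall et \near 0^'+, forall x y, Tn_rel T n x y ->
    (rho (phi y) (alpha n (phi x)) < (eps - et)%:E)%E.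
Proof.
move=> cX cT cphi eqv; have cTn := continuous_iter T `|n|%N cT.
rewrite /Tn_rel in eqv *; case: (0 <= n) in eqv *.
- have := compact_rho_slack _ _ _ _ _ cX (fun x => cvg_id) cTn cphi
    (fun z => eqv z _ erefl).
  by apply: filterS => et slack x y ->.
- have := compact_rho_slack _ _ _ _ _ cX cTn (fun x => cvg_id) cphi
    (fun z => eqv _ z erefl).
  by apply: filterS => et slack x y <-.
Qed.

Lemma renorm_rho_continuous {X : topologicalType} (phi : X -> int -> R) S :
  uniq S -> (forall x m, 0 <= phi x m) -> (forall x, 0 < mass S (phi x)) ->
  rho_continuous phi -> rho_continuous (fun x => renorm S (phi x)).
Proof.
move=> uS phi_ge0 mass_gt0 cphi x e e_gt0.
have ec_gt0 : 0 < e * mass S (phi x) / 2 by rewrite divr_gt0 ?mulr_gt0.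
apply: filterS (cphi x _ ec_gt0) => y near_y.
apply: le_lt_trans (rho_renorm_renorm_le uS (phi_ge0 y) (mass_gt0 x) (mass_gt0 y)) _.
have := le_lt_trans (rho_ge_sum S (phi x) (phi y) uS) near_y.
by rewrite !lte_fin ltr_pdivrMr ?mass_gt0 //; have := mass_gt0 x; nra.
Qed.

Lemma renorm_equivariant {X : Type} (T : X -> X) E (eps et : R)
    (phi : X -> int -> R) d S :
  uniq S -> (forall x, in_Pd d (phi x)) -> (forall x, 0 < mass S (phi x)) ->
  (forall x, 1 - et / 4 < mass S (phi x)) ->
  (forall n, n \in E -> forall x y, Tn_rel T n x y ->
     (rho (phi y) (alpha n (phi x)) < (eps - et)%:E)%E) ->
  equivariant T E eps (fun x => renorm S (phi x)).
Proof.
move=> uS Pd mass_gt0 tight eqv n nE x y Txy.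
have close_y := rho_renorm_le (Pd y) uS (mass_gt0 y); rewrite rhoC in close_y.
have close_x := rho_renorm_le (Pd x) uS (mass_gt0 x).
rewrite -(rho_alpha n) in close_x.
have := rho_le_ltD close_y (rho_lt_leD (eqv n nE x y Txy) close_x).
by move/lt_le_trans; apply; rewrite lee_fin; have := tight x; have := tight y; lra.
Qed.

End Equivariance.

Theorem lemma5p8 (R : realType) (X : metricType R) (T : X -> X)
  (d : nat) (E : seq int) (eps : R) (phi : X -> int -> R) :
  compact [set: X] ->
  (forall y : X, exists x : X, T x = y) ->
  local_homeo T ->
  0 < eps ->
  (forall x, in_Pd d (phi x)) ->
  rho_continuous phi ->
  equivariant T E eps phi ->
  exists (S : seq int) (phi' : X -> int -> R),
    [/\ (forall x, in_Pd d (phi' x) /\ supported_in S (phi' x)),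
        rho_continuous phi' &
        equivariant T E eps phi'].
Proof.
move=> cX _ lhT _ Pd cphi eqv; have cT := local_homeo_continuous lhT.
have slack : \forall et \near 0^'+, forall n, n \in E -> forall x y,
    Tn_rel T n x y -> (rho (phi y) (alpha n (phi x)) < (eps - et)%:E)%E.
  by apply: filter_forall_seq => n nE; apply: equivariant_slack cX cT cphi (eqv n nE).
have [et [[et_gt0 et_lt1] slack_et]] :=
  filter_ex (filterI (filterI (nbhs_right_gt 0) (nbhs_right_lt ltr01)) slack).
have et4_gt0 : 0 < et / 4 by rewrite divr_gt0.
have [S uS tight] := compact_uniformly_tight cX et4_gt0 Pd cphi.
have mass_gt0 x : 0 < mass S (phi x) by have := tight x; lra.
exists S, (fun x => renorm S (phi x)); split.
- by move=> x; split; [exact: renorm_in_Pd | exact: renorm_supported_in].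
- exact: renorm_rho_continuous uS (fun x => (Pd x).1) mass_gt0 cphi.
- exact: renorm_equivariant uS Pd mass_gt0 tight slack_et.
Qed.
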